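(* Let $N=\{1,\dots,n\}$, $\eta>0$, integers $B\ge1$, $Q\ge1$. Let $(A(k))_{k\ge0}$ be $n\times n$ matrices such that each $A(k)$ is doubly stochastic with positive diagonal entries and all positive entries at least $\eta$, and such that for every integer $k\ge0$ the directed graph $(N,\mathcal{E}(A(kB))\cup\cdots\cup\mathcal{E}(A((k+1)B-1)))$ is strongly connected. Let $x(0)\in\mathbb{R}^n$ have all components multiples of $1/Q$, and define componentwise $x_i(k+1)=\lfloor\sum_{j=1}^n a_{ij}(k)x_j(k)\rfloor$, where $\lfloor\cdot\rfloor$ is rounding down to the nearest multiple of $1/Q$. Let $U=\max_ix_i(0)$, $L=\min_ix_i(0)$ and $K=(U-L)Q$. If $k\ge nBK$, then all components of $x(k)$ are equal.
   Context: A matrix is doubly stochastic if it is nonnegative with all row and column sums equal to $1$. For a matrix $A=[a_{ij}]$, $\mathcal{E}(A)$ is the set of directed edges $(j,i)$ (including self-edges) with $a_{ij}>0$. *)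

From mathcomp Require Import all_boot all_order all_algebra.
From mathcomp Require Import reals.
Set Implicit Arguments. Unset Strict Implicit. Unset Printing Implicit Defensive.
Import Order.TTheory GRing.Theory Num.Theory.
Local Open Scope ring_scope.

Definition doubly_stochastic (R : realType) (n : nat) (A : 'M[R]_n) : Prop :=
  [/\ forall i j, 0 <= A i j,
      forall i, \sum_j A i j = 1 &
      forall j, \sum_i A i j = 1].

Definition edge_of (R : realType) (n : nat) (A : 'M[R]_n) (j i : 'I_n) : bool :=
  0 < A i j.

Definition window_rel (R : realType) (n : nat) (A : nat -> 'M[R]_n)
  (B k : nat) : rel 'I_n :=
  fun j i => [exists t : 'I_B, edge_of (A (k * B + t)%N) j i].

Definition strongly_connected (n : nat) (e : rel 'I_n) : Prop :=
  forall u v : 'I_n, connect e u v.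

Definition floorQ (R : realType) (Q : nat) (y : R) : R :=
  (Num.floor (y * Q%:R))%:~R / Q%:R.

Fixpoint traj (R : realType) (n : nat) (A : nat -> 'M[R]_n) (Q : nat)
  (x0 : 'I_n -> R) (k : nat) : 'I_n -> R :=
  match k with
  | 0 => x0
  | k'.+1 => fun i => floorQ Q (\sum_j A k' i j * traj A Q x0 k' j)
  end.

(* Scaled by Q, the iteration is integer-valued: y(k+1)_i = floor (sum_j a_ij(k) y_j(k)).
   Row-stochasticity makes max y nonincreasing and min y nondecreasing, and a
   positive diagonal keeps a node that is below a level u below it, so the set of
   nodes at the current maximum can only shrink.  In a window where it is neither
   empty nor everything, strong connectivity provides an edge from a node below
   the maximum into that set, which must lose a node.  Hence the potential
   n (max - min) + #{i | y_i = max} decreases at every window until max = min;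
   it starts at most n K + n and always exceeds n (max - min), so after n K
   windows the maximum equals the minimum. *)

From mathcomp Require Import all_boot all_order all_algebra.
From mathcomp Require Import reals.
From mathcomp Require Import zify.
Import Order.TTheory GRing.Theory Num.Theory.
Set Implicit Arguments. Unset Strict Implicit.
Local Open Scope ring_scope.

Section FloorAverage.
Variables (R : realType) (I : finType) (a : I -> R) (z : I -> int).
Hypotheses (a_ge0 : forall j, 0 <= a j) (a_sum1 : \sum_j a j = 1).

Let sum_weights_const (c : R) : \sum_j a j * c = c.
Proof. by rewrite -mulr_suml a_sum1 mul1r. Qed.

Lemma floor_avg_le (u : int) :
  (forall j, z j <= u) -> Num.floor (\sum_j a j * (z j)%:~R) <= u.
Proof.
move=> z_le; rewrite -(@intrKfloor R u) le_floor // -[X in _ <= X]sum_weights_const.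
by apply: ler_sum => j _; rewrite ler_wpM2l // ler_int.
Qed.

Lemma floor_avg_ge (l : int) :
  (forall j, l <= z j) -> l <= Num.floor (\sum_j a j * (z j)%:~R).
Proof.
move=> le_z; rewrite floor_ge_int -[X in X <= _]sum_weights_const.
by apply: ler_sum => j _; rewrite ler_wpM2l // ler_int.
Qed.

Lemma floor_avg_lt (u : int) j :
  (forall j, z j <= u) -> 0 < a j -> z j < u ->
  Num.floor (\sum_j a j * (z j)%:~R) < u.
Proof.
move=> z_le a_gt0 zj_lt; rewrite floor_lt_int -subr_gt0.
rewrite -{1}(sum_weights_const u%:~R) -sumrB (bigD1 j) //=.
rewrite ltr_wpDr ?sumr_ge0 // => [k _|]; rewrite -mulrBr.
  by rewrite mulr_ge0 // subr_ge0 ler_int.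
by rewrite mulr_gt0 // subr_gt0 ltr_int.
Qed.

End FloorAverage.

Lemma connect_cross (T : finType) (e : rel T) (S : {set T}) a b :
  connect e a b -> a \notin S -> b \in S ->
  exists x y, [/\ e x y, x \notin S & y \in S].
Proof.
move=> /connectP [p + ->]; elim: p a => [|c p IH] a /=.
  by move=> _ /negP.
case/andP=> e_ac c_p a_S b_S; case c_S: (c \in S); first by exists a, c.
by apply: IH c_p _ b_S; rewrite c_S.
Qed.

Section QuantizedAveraging.
Variables (R : realType) (n : nat) (A : nat -> 'M[R]_n) (y : nat -> 'I_n -> int).
Hypotheses (A_ge0 : forall t i j, 0 <= A t i j)
  (A_row1 : forall t i, \sum_j A t i j = 1)
  (A_diag : forall t i, 0 < A t i i)
  (y_step : forall t i, y t.+1 i = Num.floor (\sum_j A t i j * (y t j)%:~R)).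
Variable i0 : 'I_n.

Definition ymax t := y t [arg max_(i > i0) y t i]%O.
Definition ymin t := y t [arg min_(i < i0) y t i]%O.
Definition level t (u : int) := [set i | y t i == u].
Definition potential t :=
  n%:Z * (ymax t - ymin t) + #|level t (ymax t)|%:Z.

Lemma ymax_ub t i : y t i <= ymax t.
Proof. by rewrite /ymax; case: arg_maxP => // j _; apply. Qed.

Lemma ymin_lb t i : ymin t <= y t i.
Proof. by rewrite /ymin; case: arg_minP => // j _; apply. Qed.

Lemma card_level_ymax_gt0 t : (0 < #|level t (ymax t)|)%N.
Proof. by apply/card_gt0P; exists [arg max_(i > i0) y t i]%O; rewrite inE. Qed.

Lemma ymax_step t : ymax t.+1 <= ymax t.
Proof. by rewrite {1}/ymax y_step; apply: floor_avg_le => // j; apply: ymax_ub. Qed.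

Lemma ymin_step t : ymin t <= ymin t.+1.
Proof. by rewrite {2}/ymin y_step; apply: floor_avg_ge => // j; apply: ymin_lb. Qed.

Lemma ymax_noninc : {homo ymax : s t / (s <= t)%N >-> t <= s}.
Proof.
by apply: homo_leq => // [a b c ba cb|]; [apply: le_trans cb ba | apply: ymax_step].
Qed.

Lemma ymin_nondec : {homo ymin : s t / (s <= t)%N >-> s <= t}.
Proof.
by apply: homo_leq => // [a b c | ]; [apply: le_trans | apply: ymin_step].
Qed.

Lemma ymin_le_ymax t : ymin t <= ymax t.
Proof. exact: le_trans (ymin_lb t i0) (ymax_ub t i0). Qed.

Lemma consensus_persists s t : (s <= t)%N -> ymax s = ymin s -> ymax t = ymin t.
Proof.
move=> le_st eq_s; apply/eqP; rewrite eq_le ymin_le_ymax andbT.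
by rewrite (le_trans (ymax_noninc le_st)) // eq_s ymin_nondec.
Qed.

Lemma level_step t u : ymax t <= u -> level t.+1 u \subset level t u.
Proof.
move=> le_u; apply/subsetP => i; rewrite !inE; apply: contraLR => ne_u.
have lt_u : y t i < u by rewrite lt_neqAle ne_u (le_trans (ymax_ub t i)).
rewrite y_step lt_eqF //; apply: floor_avg_lt lt_u => // j.
exact: le_trans (ymax_ub t j) le_u.
Qed.

Lemma level_sub s t u : (s <= t)%N -> ymax s <= u -> level t u \subset level s u.
Proof.
move=> /subnKC <-; elim: (t - s)%N => [|d IH] le_u; first by rewrite addn0.
rewrite addnS; apply: subset_trans (IH le_u); apply: level_step.
by rewrite (le_trans (ymax_noninc (leq_addr d s))).
Qed.

Lemma level_window_shrink B m :
  strongly_connected (window_rel A B m) -> ymin (m * B) < ymax (m * B) ->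
  (#|level (m * B + B) (ymax (m * B))| < #|level (m * B) (ymax (m * B))|)%N.
Proof.
set t := (m * B)%N; set u := ymax t; set S := level t u.
move=> connected_window lt_min_max; rewrite ltnNge; apply/negP => card_ge.
have level_window r : (r <= B)%N -> level (t + r) u = S.
  move=> le_rB; apply/eqP; rewrite eqEcard level_sub ?leq_addr //=.
  apply: leq_trans card_ge (subset_leq_card (level_sub _ _)).
    by rewrite leq_add2l.
  exact: ymax_noninc (leq_addr _ _).
have min_out : [arg min_(i < i0) y t i]%O \notin S by rewrite inE lt_eqF.
have max_in : [arg max_(i > i0) y t i]%O \in S by rewrite inE.
have [x [z [/existsP[s A_zx] x_out z_in]]] :=
  connect_cross (connected_window _ _) min_out max_in.
have le_u : forall j, y (t + s) j <= u.
  by move=> j; rewrite (le_trans (ymax_ub _ j)) ?ymax_noninc ?leq_addr.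
have x_lt : y (t + s) x < u.
  rewrite lt_neqAle le_u andbT.
  by move: x_out; rewrite -(level_window s) ?inE // ltnW.
have z_next : y (t + s).+1 z = u.
  by apply/eqP; move: z_in; rewrite -addnS -(level_window s.+1) ?inE.
have := floor_avg_lt (A_ge0 _ z) (A_row1 _ z) le_u A_zx x_lt.
by rewrite -y_step z_next ltxx.
Qed.

Lemma card_level_le t u : (#|level t u| <= n)%N.
Proof. by apply: leq_trans (max_card _) _; rewrite card_ord. Qed.

Lemma potential_gt t : n%:Z * (ymax t - ymin t) < potential t.
Proof. by rewrite /potential ltrDl ltz_nat card_level_ymax_gt0. Qed.

Lemma potential_le t : potential t <= n%:Z * (ymax t - ymin t) + n%:Z.
Proof. by rewrite lerD2l lez_nat card_level_le. Qed.

Lemma potential_window B m :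
  strongly_connected (window_rel A B m) -> ymin (m * B) < ymax (m * B) ->
  potential (m * B + B) < potential (m * B).
Proof.
set t := (m * B)%N => connected_window lt_min_max.
have ymin_window : ymin t <= ymin (t + B) by rewrite ymin_nondec ?leq_addr.
have := potential_gt t; have := card_level_le (t + B) (ymax (t + B)).
have := ymax_noninc (leq_addr B t); rewrite le_eqVlt => /orP[/eqP eq_max|lt_max].
  have := level_window_shrink connected_window lt_min_max.
  rewrite /potential -/t -eq_max; nia.
rewrite /potential; nia.
Qed.

Lemma potential_decay B :
  (forall m, strongly_connected (window_rel A B m)) ->
  forall m, ymax (m * B) = ymin (m * B) \/ potential (m * B) + m%:Z <= potential 0.
Proof.
move=> connected; elim=> [|m IH]; first by right; rewrite mul0n addr0.
rewrite mulSnr; have [eq_m|ne_m] := eqVneq (ymax (m * B)) (ymin (m * B)).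
  by left; apply: consensus_persists eq_m; rewrite leq_addr.
have lt_m : ymin (m * B) < ymax (m * B) by rewrite lt_neqAle eq_sym ne_m ymin_le_ymax.
have := potential_window (connected m) lt_m.
case: IH => [/eqP|le_m]; first by rewrite (negPf ne_m).
by right; lia.
Qed.

Lemma consensus_at_window B m :
  (forall m, strongly_connected (window_rel A B m)) ->
  n%:Z * (ymax 0 - ymin 0) <= m%:Z -> ymax (m * B) = ymin (m * B).
Proof.
move=> connected le_m; case: (potential_decay connected m) => // le_pot.
have pot_m : potential (m * B) <= n%:Z.
  by have := potential_le 0; lia.
have : n%:Z * (ymax (m * B) - ymin (m * B)) < n%:Z * 1.
  by rewrite mulr1; apply: lt_le_trans (potential_gt _) pot_m.
rewrite ltr_pM2l ?ltz_nat ?(leq_ltn_trans (leq0n _) (ltn_ord i0)) // => spread_lt1.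
by apply/eqP; rewrite eq_le ymin_le_ymax andbT -subr_le0 -ltzD1.
Qed.

Lemma consensus_after B k :
  (0 < B)%N -> (forall m, strongly_connected (window_rel A B m)) ->
  (n * B)%:Z * (ymax 0 - ymin 0) <= k%:Z -> forall i j, y k i = y k j.
Proof.
move=> B_gt0 connected le_k.
have [W le_WBk lt_kWB] : exists2 W, (W * B <= k)%N & (k < W.+1 * B)%N.
  by exists (k %/ B)%N; rewrite ?leq_divM // ltn_ceil.
have le_W : n%:Z * (ymax 0 - ymin 0) <= W%:Z.
  rewrite -ltzD1 -(ltr_pM2r (_ : 0 < B%:Z)) ?ltz_nat //.
  by rewrite mulrAC -PoszM (le_lt_trans le_k) // -PoszD addn1 -PoszM ltz_nat.
have consensus_k := consensus_persists le_WBk (consensus_at_window connected le_W).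
have y_k i : y k i = ymin k by apply/eqP; rewrite eq_le ymin_lb -consensus_k ymax_ub.
by move=> i j; rewrite !y_k.
Qed.

End QuantizedAveraging.

Section ScaledTrajectory.
Variables (R : realType) (n : nat) (A : nat -> 'M[R]_n) (Q : nat) (x0 : 'I_n -> R).
Hypotheses (Q_gt0 : (0 < Q)%N) (x0_grid : forall i, exists z : int, x0 i = z%:~R / Q%:R).

Definition scaled_traj t i : int := Num.floor (traj A Q x0 t i * Q%:R).

Let Q_neq0 : Q%:R != 0 :> R. Proof. by rewrite pnatr_eq0 -lt0n. Qed.

Lemma scaled_trajE t i : traj A Q x0 t i = (scaled_traj t i)%:~R / Q%:R.
Proof.
rewrite /scaled_traj; case: t => [|t] /=; last by rewrite /floorQ divfK // intrKfloor.
by have [z ->] := x0_grid i; rewrite divfK // intrKfloor.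
Qed.

Lemma scaled_traj_step t i :
  scaled_traj t.+1 i = Num.floor (\sum_j A t i j * (scaled_traj t j)%:~R).
Proof.
rewrite {1}/scaled_traj /= /floorQ divfK // intrKfloor mulr_suml.
by congr Num.floor; apply: eq_bigr => j _; rewrite scaled_trajE -mulrA divfK.
Qed.

End ScaledTrajectory.

Unset Implicit Arguments.

Theorem proposition3 (R : realType) (n : nat) (eta : R) (B Q : nat)
  (A : nat -> 'M[R]_n) (x0 : 'I_n -> R) (U L : R) (k : nat) :
  (0 < n)%N -> 0 < eta -> (1 <= B)%N -> (1 <= Q)%N ->
  (forall t, doubly_stochastic (A t)) ->
  (forall t i, 0 < A t i i) ->
  (forall t i j, 0 < A t i j -> eta <= A t i j) ->
  (forall m, strongly_connected (window_rel A B m)) ->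
  (forall i, exists z : int, x0 i = z%:~R / Q%:R) ->
  (exists i, x0 i = U) -> (forall i, x0 i <= U) ->
  (exists i, x0 i = L) -> (forall i, L <= x0 i) ->
  (n * B)%:R * ((U - L) * Q%:R) <= k%:R ->
  forall i j, traj A Q x0 k i = traj A Q x0 k j.
Proof.
move=> n_gt0 _ B_gt0 Q_gt0 stochastic A_diag _ connected x0_grid.
move=> [iU x0_iU] le_U [iL x0_iL] ge_L le_k.
set y := scaled_traj A Q x0.
have y0E i : (y 0%N i)%:~R = x0 i * Q%:R.
  by rewrite [x0 i](scaled_trajE A Q_gt0 x0_grid 0%N) divfK // pnatr_eq0 -lt0n.
have y0_le i : y 0%N i <= y 0%N iU by rewrite -(ler_int R) !y0E ler_wpM2r // x0_iU le_U.
have y0_ge i : y 0%N iL <= y 0%N i by rewrite -(ler_int R) !y0E ler_wpM2r // x0_iL ge_L.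
pose i0 := Ordinal n_gt0.
have spread0 : (n * B)%:Z * (ymax y i0 0 - ymin y i0 0) <= k%:Z.
  apply: le_trans (_ : _ <= (n * B)%:Z * (y 0%N iU - y 0%N iL)) _.
    by rewrite ler_wpM2l // lerB ?y0_le ?y0_ge.
  by rewrite -(ler_int R) intrM intrB !y0E x0_iU x0_iL -mulrBl.
move=> i j; rewrite !(scaled_trajE A Q_gt0 x0_grid); congr (_%:~R / _).
have A_ge0 t i' j' : 0 <= A t i' j' by case: (stochastic t).
have A_row1 t i' : \sum_j' A t i' j' = 1 by case: (stochastic t).
exact: (consensus_after A_ge0 A_row1 A_diag (scaled_traj_step A Q_gt0 x0_grid)
  B_gt0 connected spread0).
Qed.
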